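(* Let $\Gamma$ be a temporal language preserved by $\mathrm{peak}$. If $\Gamma$ pp-defines neither $\mathrm{EqXor}=\{(x,y,z)\in\mathbb{Q}^3\mid x=y\vee x=z\}$ nor $\mathrm{EqOr}_n=\{(x_1,\dots,x_n)\in\mathbb{Q}^n\mid\bigvee_{i\neq j}x_i=x_j\}$ for any $n\ge3$, then $\Gamma$ is preserved by all permutations of $\mathbb{Q}$.
   Context: A temporal language is a relational structure with domain $\mathbb{Q}$ and finite signature whose relations are first-order definable in $(\mathbb{Q};<)$. $\Gamma$ pp-defines $R$ if $R$ is definable by a primitive positive formula (existentially quantified conjunction of atomic formulas) over the signature of $\Gamma$. A unary operation $f$ preserves $\Gamma$ if applying $f$ componentwise maps each relation of $\Gamma$ into itself. $\mathrm{peak}(x)=-1$ for $x\neq0$ and $1$ for $x=0$. *)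

From mathcomp Require Import all_boot all_order all_algebra.
From Stdlib Require List.
Set Implicit Arguments. Unset Strict Implicit. Unset Printing Implicit Defensive.
Import Order.TTheory GRing.Theory Num.Theory.
Local Open Scope ring_scope.

Record qrel := QRel { ar : nat; rl : ('I_ar -> rat) -> Prop }.

Definition empty_qrel : qrel := @QRel 0 (fun _ => False).

Definition structure := seq qrel.

Definition update (v : nat -> rat) (x : nat) (q : rat) : nat -> rat :=
  fun y => if y == x then q else v y.

Inductive fo :=
| FLt : nat -> nat -> fo
| FEq : nat -> nat -> fo
| FFalse : fo
| FNot : fo -> fo
| FAnd : fo -> fo -> fo
| FOr : fo -> fo -> fo
| FEx : nat -> fo -> fo.

Fixpoint fo_sat (v : nat -> rat) (phi : fo) : Prop :=
  match phi with
  | FLt i j => v i < v j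
  | FEq i j => v i = v j
  | FFalse => False
  | FNot p => ~ fo_sat v p
  | FAnd p q => fo_sat v p /\ fo_sat v q
  | FOr p q => fo_sat v p \/ fo_sat v q
  | FEx x p => exists r : rat, fo_sat (update v x r) p
  end.

(* R of arity n is defined by phi with free variables among x_0..x_{n-1}
   (the truth value must not depend on the other variables). *)
Definition fo_defines n (R : ('I_n -> rat) -> Prop) (phi : fo) : Prop :=
  forall (t : 'I_n -> rat) (v : nat -> rat),
    (forall i : 'I_n, v i = t i) -> (R t <-> fo_sat v phi).

Definition fo_definable_lt (R : qrel) : Prop :=
  exists phi, fo_defines (@rl R) phi.

Definition temporal (G : structure) : Prop :=
  forall R, List.In R G -> fo_definable_lt R.

Inductive ppf :=
| PTrue : ppf
| PEq : nat -> nat -> ppf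
| PRel : nat -> seq nat -> ppf          (* R_k(x_{a_0},...,x_{a_{m-1}}) *)
| PAnd : ppf -> ppf -> ppf
| PEx : nat -> ppf -> ppf.

Fixpoint pp_sat (G : structure) (v : nat -> rat) (phi : ppf) : Prop :=
  match phi with
  | PTrue => True
  | PEq i j => v i = v j
  | PRel k args =>
      let R := nth empty_qrel G k in
      (k < size G)%N /\ size args = ar R /\
      @rl R (fun i : 'I_(ar R) => v (nth 0%N args i))
  | PAnd p q => pp_sat G v p /\ pp_sat G v q
  | PEx x p => exists r : rat, pp_sat G (update v x r) p
  end.

Definition pp_defines (G : structure) n (R : ('I_n -> rat) -> Prop) : Prop :=
  exists phi : ppf, forall (t : 'I_n -> rat) (v : nat -> rat),
    (forall i : 'I_n, v i = t i) -> (R t <-> pp_sat G v phi).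

Definition preserves (G : structure) (f : rat -> rat) : Prop :=
  forall R, List.In R G -> forall t : 'I_(ar R) -> rat, @rl R t -> @rl R (fun i => f (t i)).

Definition peak (x : rat) : rat := if x == 0 then 1 else -1.

Definition EqXor (t : 'I_3 -> rat) : Prop :=
  t (@Ordinal 3 0 isT) = t (@Ordinal 3 1 isT) \/
  t (@Ordinal 3 0 isT) = t (@Ordinal 3 2 isT).

Definition EqOr n (t : 'I_n -> rat) : Prop :=
  exists i j : 'I_n, i != j /\ t i = t j.

From mathcomp Require Import all_boot all_order all_algebra.
From mathcomp Require Import ring lra.
From Stdlib Require Import Classical FunctionalExtensionality.
Set Implicit Arguments. Unset Strict Implicit. Unset Printing Implicit Defensive.
Import Order.TTheory GRing.Theory Num.Theory.
Local Open Scope ring_scope.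

(* A relation R of a temporal language is first-order definable in (Q; <), so
   membership of a tuple only depends on its order type; together with peak this
   puts in R, along with a tuple t, every constant tuple and every two-valued
   indicator of a t-class.  Since f \o t is coarser than t, it suffices to show
   that R contains every tuple coarser than t.  This goes by induction, on the
   size of a t-saturated set for two-valued tuples and on the number of values
   in general; at each step a failure would make some pp-definable minor of R
   equal to EqXor, respectively EqOr_j. *)

Definition order_auto (F : rat -> rat) :=
  {homo F : x y / x < y} /\ forall z, exists x, F x = z.

Lemma order_auto_ltE F : order_auto F -> {mono F : x y / x < y}.
Proof. by case=> /le_mono /leW_mono. Qed.

Lemma order_auto_inj F : order_auto F -> injective F.
Proof. by case=> /le_mono /inc_inj. Qed.

Lemma order_auto_comp F F' : order_auto F -> order_auto F' -> order_auto (F' \o F).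
Proof.
move=> [incF surjF] [incF' surjF']; split=> [x y lt_xy | z]; first exact/incF'/incF.
by have [y <-] := surjF' z; have [x <-] := surjF y; exists x.
Qed.

Lemma order_auto_shift c : order_auto (fun x => x + c).
Proof. by split=> [x y | z]; [rewrite ltrD2r | exists (z - c); rewrite subrK]. Qed.

Lemma order_auto_kink b l : 0 < l ->
  order_auto (fun x => if x < b then b + l * (x - b) else x).
Proof.
move=> l_gt0; split=> [x y lt_xy | z].
- have l_pos v : (l * v < 0) = (v < 0) by rewrite pmulr_rlt0.
  case: ifP => xb; case: ifP => yb.
  + by rewrite ltrD2l ltr_pM2l // ltrD2r.
  + by move: xb yb; rewrite -subr_lt0 -l_pos => xb /negbT; rewrite -leNgt; lra.
  + by move: xb yb lt_xy => /negbT; rewrite -leNgt => xb yb; lra.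
  + by [].
- have [zb | bz] := ltP z b; last by exists z; rewrite ltNge bz.
  exists (b + (z - b) / l).
  have neg : (z - b) / l < 0 by rewrite pmulr_llt0 ?invr_gt0 // subr_lt0.
  have -> : b + (z - b) / l < b by lra.
  by rewrite addrAC subrr add0r mulrCA divff ?gt_eqF // mulr1 addrC subrK.
Qed.

Lemma fo_sat_order_auto F phi v w : order_auto F -> (forall x, w x = F (v x)) ->
  fo_sat v phi <-> fo_sat w phi.
Proof.
move=> autF.
elim: phi v w => [i j|i j||p IHp|p IHp q IHq|p IHp q IHq|x p IHp] v w wE /=.
- by rewrite !wE (order_auto_ltE autF).
- by rewrite !wE; split=> [-> // | /(order_auto_inj autF)].
- by [].
- by rewrite (IHp v w).
- by rewrite (IHp v w) // (IHq v w).
- by rewrite (IHp v w) // (IHq v w).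
- split=> -[r sat_r].
  + by exists (F r); apply/(IHp (update v x r)) => // y; rewrite /update; case: eqP.
  + have [r' Fr'] := autF.2 r; exists r'; apply/(IHp _ (update w x r)) => // y.
    by rewrite /update; case: eqP.
Qed.

Lemma order_auto_interp (a b : seq rat) : sorted <%R a -> sorted <%R b ->
  size a = size b -> exists2 F, order_auto F & map F a = b.
Proof.
elim: a b => [|a0 a IH] [|b0 b] //= sa sb.
  by exists id => //; split=> // z; exists z.
move=> [size_ab].
case: a sa size_ab IH => [|a1 a] /= sa size_ab IH.
  case: b sb size_ab => // _ _; exists (fun x => x + (b0 - a0)).
    exact: order_auto_shift.
  by rewrite addrC subrK.
case: b sb size_ab => // b1 b /andP[b01 sb] size_ab.
move: sa => /andP[a01 sa].
have [F autF /= [Fa1 Fa]] := IH (b1 :: b) sa sb size_ab.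
have Fa01 : F a0 < b1 by rewrite -Fa1 (order_auto_ltE autF).
pose l := (b1 - b0) / (b1 - F a0).
have l_gt0 : 0 < l by rewrite divr_gt0 // subr_gt0.
exists ((fun x => if x < b1 then b1 + l * (x - b1) else x) \o F).
  exact: order_auto_comp autF (order_auto_kink _ l_gt0).
rewrite /= Fa01 Fa1 ltxx map_comp Fa; congr [:: _, _ & _].
  by rewrite /l; field; rewrite subr_eq0 gt_eqF.
apply: map_id_in => x xb /=.
by rewrite ltNge ltW //; apply: (allP (order_path_min lt_trans sb)).
Qed.

Definition same_order_type n (u v : 'I_n -> rat) := forall i j, (u i < u j) = (v i < v j).

Lemma same_order_type_eq n (u v : 'I_n -> rat) i j :
  same_order_type u v -> (u i == u j) = (v i == v j).
Proof. by move=> uv; rewrite !eq_le !leNgt !uv. Qed.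

Lemma same_order_type_auto n (u v : 'I_n -> rat) : same_order_type u v ->
  exists2 F, order_auto F & forall i, F (u i) = v i.
Proof.
move=> uv.
pose g x := if [pick i | u i == x] is Some i then v i else 0.
have gE i : g (u i) = v i.
  rewrite /g; case: pickP => [i' /eqP ui'i | /(_ i)]; last by rewrite eqxx.
  by apply/eqP; rewrite -(same_order_type_eq _ _ uv) ui'i.
pose a := sort <=%R (undup (codom u)).
have mem_a x : (x \in a) = (x \in codom u) by rewrite mem_sort mem_undup.
have sorted_a : sorted <%R a.
  by rewrite lt_sorted_uniq_le sort_uniq undup_uniq (sort_sorted le_total).
have sorted_ga : sorted <%R (map g a).
  apply: (homo_sorted_in (P := mem a)) (allss a) sorted_a => x y.
  by rewrite !mem_a => /codomP[i ->] /codomP[j ->]; rewrite !gE uv.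
have [F autF Fa] := order_auto_interp sorted_a sorted_ga (esym (size_map g a)).
by exists F => // i; rewrite -gE ((eq_in_map F g a).2 Fa) // mem_a codom_f.
Qed.

Lemma fo_definable_order_type (R : qrel) : fo_definable_lt R ->
  forall u v, same_order_type u v -> @rl R u -> @rl R v.
Proof.
move=> [phi def_R] u v /same_order_type_auto[F autF Fu] Ru.
pose ext x := if insub x is Some i then u i else 0.
have extE (i : 'I_(ar R)) : ext i = u i by rewrite /ext valK.
apply/(def_R v (F \o ext)) => [i | ]; first by rewrite /= extE.
by apply/(fo_sat_order_auto phi autF (v := ext)) => //; apply/(def_R u).
Qed.

Lemma pp_defines_ext G n (R S : ('I_n -> rat) -> Prop) :
  pp_defines G R -> (forall y, R y <-> S y) -> pp_defines G S.
Proof. by move=> [phi def_R] RS; exists phi => t v vt; rewrite -RS; apply: def_R. Qed.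

Lemma pp_defines_forall G n (I : finType) (R : I -> ('I_n -> rat) -> Prop) :
  (forall x, pp_defines G (R x)) -> pp_defines G (fun y => forall x, R x y).
Proof.
move=> def_R.
have def_seq (s : seq I) : pp_defines G (fun y => forall x, x \in s -> R x y).
  elim: s => [|x s [phi def_s]]; first by exists PTrue.
  have [psi def_x] := def_R x.
  exists (PAnd psi phi) => t v vt /=; rewrite -(def_x t v vt) -(def_s t v vt).
  split=> [Rt | [Rxt Rst] z]; first by split=> [|z zs]; apply: Rt; rewrite inE ?eqxx ?zs ?orbT.
  by rewrite inE => /predU1P[-> | /Rst].
apply: pp_defines_ext (def_seq (enum I)) _ => y.
by split=> Ry x => [|_]; apply: Ry; rewrite ?mem_enum.
Qed.

Lemma In_seq_nth (T : Type) (x0 x : T) (s : seq T) :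
  List.In x s -> exists2 k, (k < size s)%N & nth x0 s k = x.
Proof.
elim: s => [|y s IH] //= [-> | /IH[k lt_k <-]]; first by exists 0%N.
by exists k.+1.
Qed.

Lemma pp_defines_rel_minor G R m (h : 'I_(ar R) -> 'I_m) :
  List.In R G -> pp_defines G (fun y => @rl R (fun i => y (h i))).
Proof.
move=> /(In_seq_nth empty_qrel)[k lt_k eR]; subst R; set R := nth empty_qrel G k in h *.
exists (PRel k [seq val (h i) | i <- enum 'I_(ar R)]) => y v vy /=.
rewrite size_map size_enum_ord.
have -> : (fun i : 'I_(ar R) => v (nth 0%N [seq val (h i) | i <- enum 'I_(ar R)] i))
          = (fun i => y (h i)).
  by apply: functional_extensionality => i; rewrite (nth_map i) ?size_enum_ord // nth_ord_enum vy.
by split=> [|[_ []]].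
Qed.

Lemma lt_if (p q : bool) (c d : rat) :
  ((if p then c else d) < (if q then c else d)) = ~~ p && q && (d < c) || p && ~~ q && (c < d).
Proof. by case: p q => -[] /=; rewrite ?ltxx ?orbF. Qed.

Lemma two_values (T : finType) (u : T -> rat) :
  (size (undup (codom u)) <= 2)%N -> exists c d, forall x, u x = c \/ u x = d.
Proof.
have : forall x, u x \in undup (codom u) by move=> x; rewrite mem_undup codom_f.
case: (undup _) => [|c [|d []]] //= mem_u _; first by exists 0, 0 => x; have := mem_u x.
  by exists c, c => x; have := mem_u x; rewrite inE => /eqP; left.
by exists c, d => x; have := mem_u x; rewrite !inE => /predU1P[|/eqP]; [left|right].
Qed.

Lemma size_values_comp (T T' : finType) (y : T' -> rat) (f : T -> T') :
  (size (undup (codom (y \o f))) <= size (undup (codom y)))%N.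
Proof.
apply: uniq_leq_size (undup_uniq _) _ => z.
by rewrite !mem_undup => /codomP[x ->]; apply: codom_f.
Qed.

Lemma size_values_EqOr j (y : 'I_j -> rat) : EqOr y -> (size (undup (codom y)) < j)%N.
Proof.
move=> [a [b [neq_ab yab]]].
have size_y : size (codom y) = j by rewrite size_codom card_ord.
rewrite ltn_neqAle (leq_trans (size_undup _)) ?size_y // andbT.
apply: contra neq_ab => /eqP size_uy; apply/eqP; apply: (injectiveP _ _) yab.
by rewrite /injectiveb /dinjectiveb (uniq_size_uniq (undup_uniq _) (mem_undup _)) size_y size_uy.
Qed.

Lemma factor_sorted_values (T : finType) (u : T -> rat) :
  exists (g : 'I_(size (undup (codom u))) -> rat) (h : T -> 'I_(size (undup (codom u)))),
    {homo g : a b / (a < b)%O >-> a < b} /\ forall x, u x = g (h x).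
Proof.
pose s := sort <=%R (undup (codom u)).
have size_s : size s = size (undup (codom u)) by rewrite size_sort.
have mem_s x : u x \in s by rewrite mem_sort mem_undup codom_f.
have lt_index x : (index (u x) s < size (undup (codom u)))%N by rewrite -size_s index_mem.
exists (fun a => nth 0 s a), (fun x => Ordinal (lt_index x)); split=> [a b lt_ab | x]; last first.
  by rewrite /= nth_index.
have sorted_s : sorted <%R s.
  by rewrite lt_sorted_uniq_le sort_uniq undup_uniq (sort_sorted le_total).
by apply: (sorted_ltn_nth lt_trans) => //; rewrite inE size_s.
Qed.

Lemma increasing_reindex j (y : 'I_j -> rat) : injective y ->
  exists rho : 'I_j -> 'I_j, {homo (fun a => y (rho a)) : a b / (a < b)%O >-> a < b}.
Proof.
move=> y_inj; pose s := sort <=%R (codom y).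
have size_s : size s = j by rewrite size_sort size_codom card_ord.
have sorted_s : sorted <%R s.
  by rewrite lt_sorted_uniq_le sort_uniq (sort_sorted le_total) andbT; apply/injectiveP.
have yE (a : 'I_j) : exists i, y i == nth 0 s a.
  have : nth 0 s a \in codom y by rewrite -(mem_sort <=%R) mem_nth ?size_s.
  by move=> /codomP[i ->]; exists i.
exists (fun a : 'I_j => odflt a [pick i | y i == nth 0 s a]) => a b lt_ab /=.
have pickE (c : 'I_j) : y (odflt c [pick i | y i == nth 0 s c]) = nth 0 s c.
  by case: pickP => [i /eqP // | none]; have [i] := yE c; rewrite none.
by rewrite !pickE; apply: (sorted_ltn_nth lt_trans) => //; rewrite inE size_s.
Qed.

Lemma same_order_type_comp n j (g1 g2 : 'I_j -> rat) (h : 'I_n -> 'I_j) :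
  {homo g1 : a b / (a < b)%O >-> a < b} -> {homo g2 : a b / (a < b)%O >-> a < b} ->
  same_order_type (fun i => g1 (h i)) (fun i => g2 (h i)).
Proof. by move=> /le_mono/leW_mono g1E /le_mono/leW_mono g2E i i'; rewrite g1E g2E. Qed.

Section CoarserTuples.
Variables (G : structure) (n : nat) (P : ('I_n -> rat) -> Prop).
Hypothesis P_order_type : forall u v, same_order_type u v -> P u -> P v.
Hypothesis P_peak : forall u, P u -> P (fun i => peak (u i)).
Hypothesis P_minor : forall m (h : 'I_n -> 'I_m), pp_defines G (fun y => P (fun i => y (h i))).
Hypothesis no_EqXor : ~ pp_defines G EqXor.
Hypothesis no_EqOr : forall j, (3 <= j)%N -> ~ pp_defines G (@EqOr j).

Lemma P_ext u v : u =1 v -> P u -> P v.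
Proof. by move=> uv; apply: P_order_type => i j; rewrite !uv. Qed.

Lemma P_indicator u a c d : c != d -> P u -> P (fun i => if u i == a then c else d).
Proof.
move=> neq_cd Pu.
have P_at_a : P (fun i => if u i == a then 1 else -1).
  apply: P_ext (P_peak (P_order_type (v := fun i => u i - a) _ Pu)) => [i | i j].
    by rewrite /peak subr_eq0.
  by rewrite ltrD2r.
have P_off_a : P (fun i => if u i == a then -1 else 1).
  apply: P_ext (P_peak (P_order_type (v := fun i => (if u i == a then 1 else -1) + 1) _ P_at_a)).
    by move=> i; rewrite /peak; case: (u i == a).
  by move=> i j; rewrite ltrD2r.
have m1_lt1 : (-1 : rat) < 1 by [].
by case: ltgtP neq_cd => // cd _; [apply: P_order_type P_off_a | apply: P_order_type P_at_a];
  move=> i j; rewrite !lt_if cd (lt_gtF cd) m1_lt1 (lt_gtF m1_lt1).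
Qed.

Variable t : 'I_n -> rat.
Hypothesis Pt : P t.

Lemma P_const c : P (fun=> c).
Proof.
have P_m1 : P (fun=> -1).
  apply: P_ext (P_peak (P_indicator 0 (_ : 1 != -1) Pt)) => // i.
  by rewrite /peak; case: (t i == 0).
by apply: P_order_type P_m1 => i j; rewrite !ltxx.
Qed.

Definition saturated (S : {set 'I_n}) := forall i j, t i = t j -> (i \in S) = (j \in S).

(* Peel off the t-class [C] of a point of [S]: the minor of [P] along
   [C |-> 1, S :\: C |-> 2, elsewhere |-> 0] would otherwise define EqXor. *)
Lemma P_two_valued S c d : saturated S -> P (fun i => if i \in S then c else d).
Proof.
have [k] := ubnP #|S|; elim: k S c d => // k IH S c d lt_Sk satS.
have [-> | [i0 i0S]] := set_0Vmem S.
  by apply: P_ext (P_const d) => i; rewrite inE.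
have [<- | neq_cd] := eqVneq c d; first by apply: P_ext (P_const c) => i; case: ifP.
apply: NNPP => notP.
pose C := [set i | t i == t i0]; pose S' := S :\: C.
have C_S i : i \in C -> i \in S by rewrite inE => /eqP/satS ->.
have P_C e e' : P (fun i => if i \in C then e else e').
  have [<- | neq_e] := eqVneq e e'; first by apply: P_ext (P_const e) => i; case: ifP.
  by apply: P_ext (P_indicator (t i0) neq_e Pt) => i; rewrite inE.
have P_S' e e' : P (fun i => if i \in S' then e else e').
  apply: IH => [|i j tij]; last by rewrite !inE tij (satS _ _ tij).
  rewrite -ltnS (leq_trans _ lt_Sk) // (cardsD1 i0 S) i0S add1n ltnS.
  apply/subset_leq_card/subsetP => i; rewrite !inE => /andP[ne_i0 ->].
  by rewrite andbT; apply: contraNneq ne_i0 => ->.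
pose x0 := @Ordinal 3 0 isT; pose x1 := @Ordinal 3 1 isT; pose x2 := @Ordinal 3 2 isT.
pose h i := if i \in C then x1 else if i \in S then x2 else x0.
apply: no_EqXor; apply: pp_defines_ext (P_minor h) _ => y; rewrite /EqXor -/x0 -/x1 -/x2; split.
- move=> Pyh; apply: NNPP => /not_or_and[/eqP ne01 /eqP ne02]; apply: notP.
  apply: P_ext (P_indicator (y x0) (_ : d != c) Pyh) => [i|]; last by rewrite eq_sym.
  rewrite /h; have [iC | _] := boolP (i \in C); first by rewrite C_S // eq_sym (negbTE ne01).
  by case: (i \in S); rewrite ?eqxx // eq_sym (negbTE ne02).
- case=> [e01 | e02].
  + apply: P_ext (P_S' (y x2) (y x0)) => i; rewrite /h [i \in S']inE.
    by have [iC | _] := boolP (i \in C); rewrite ?andbF ?andbT //; case: (i \in S).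
  + apply: P_ext (P_C (y x1) (y x0)) => i; rewrite /h.
    by case: ifP => //; case: ifP.
Qed.

Definition coarser (u : 'I_n -> rat) := forall i j, t i = t j -> u i = u j.

(* Induction on the number [j] of values of [u]: if [u] were not in [P], the
   conjunction over [rho] of the minors [y \o rho \o h] would define [EqOr j]. *)
Lemma P_coarser u : coarser u -> P u.
Proof.
have [k] := ubnP (size (undup (codom u))); elim: k u => // k IH u lt_uk tu.
have [le2 | gt2] := leqP (size (undup (codom u))) 2.
  have [c [d ucd]] := two_values le2.
  apply: P_ext (P_two_valued (S := [set i | u i == c]) c d _) => [i | i j /tu uij].
    by rewrite inE; case: eqP => // ne_c; case: (ucd i).
  by rewrite !inE uij.
apply: NNPP => notPu.
have [g [h [g_inc uE]]] := factor_sorted_values u.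
set j := size (undup (codom u)) in g h g_inc uE gt2 lt_uk *.
apply: (no_EqOr gt2).
apply: pp_defines_ext (pp_defines_forall (fun rho : {ffun 'I_j -> 'I_j} =>
  P_minor (fun i => rho (h i)))) _ => y; split=> [Py | EqOr_y rho].
- apply: NNPP => not_EqOr.
  have y_inj : injective y.
    move=> a b yab; apply: NNPP => neq_ab; apply: not_EqOr; exists a, b.
    by split=> //; apply/eqP.
  have [rho rho_inc] := increasing_reindex y_inj.
  apply: notPu; apply: P_order_type (Py [ffun a => rho a]) => i i'.
  by rewrite !ffunE !uE (same_order_type_comp h rho_inc g_inc).
- apply: IH => [|i i' /tu]; last first.
    by rewrite !uE => /(inc_inj (le_mono g_inc)) ->.
  apply: leq_ltn_trans (size_values_comp y (fun i => rho (h i))) _.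
  exact: leq_trans (size_values_EqOr EqOr_y) lt_uk.
Qed.
End CoarserTuples.

Theorem lemma4p7 (G : structure) :
  temporal G ->
  preserves G peak ->
  ~ pp_defines G EqXor ->
  (forall n : nat, (3 <= n)%N -> ~ pp_defines G (@EqOr n)) ->
  forall f : rat -> rat, bijective f -> preserves G f.
Proof.
move=> temporalG peakG no_EqXor no_EqOr f _ R RG t Rt.
have order_R := fo_definable_order_type (temporalG R RG).
have minor_R m (h : 'I_(ar R) -> 'I_m) := pp_defines_rel_minor h RG.
apply: (P_coarser order_R (peakG R RG) minor_R no_EqXor no_EqOr Rt).
by move=> i j ->.
Qed.
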